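(* Let $d\ge2$ be an integer, let $\lambda,D_1,\dots,D_d$ be real constants and $D=\sum_{i=1}^dD_i$. There exists $L=(L_1,\dots,L_d)\in C^1([0,1];\mathbb{R}^d)$ satisfying $$L_i'=-\Big(\sum_{k=1}^dL_k\Big)L_i-\lambda\ \text{ on }[0,1]\quad\text{and}\quad\int_0^1L_i(r)\,dr=D_i\qquad(i=1,\dots,d)$$ if and only if $\lambda<\pi^2/d$. Moreover, such a solution is unique. *)

From Stdlib Require Import Reals.
From Coquelicot Require Import Coquelicot.
Open Scope R_scope.

Definition I01 (x : R) : Prop := 0 <= x <= 1.

Fixpoint sumR (n : nat) (f : nat -> R) : R :=
  match n with
  | O => 0
  | S m => sumR m f + f m
  end.

Definition deriv_on01 (f f' : R -> R) : Prop :=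
  forall x, I01 x ->
    filterlim (fun h => (f (x + h) - f x) / h)
      (within (fun h => h <> 0 /\ I01 (x + h)) (locally 0))
      (locally (f' x)).

Definition cont_on01 (g : R -> R) : Prop :=
  forall x, I01 x -> filterlim g (within I01 (locally x)) (locally (g x)).

Definition C1_on01_with (f f' : R -> R) : Prop :=
  deriv_on01 f f' /\ cont_on01 f'.

Definition IsSol (d : nat) (lam : R) (Dc : nat -> R) (L : nat -> R -> R) : Prop :=
  exists L' : nat -> R -> R,
    forall i, (i < d)%nat ->
      C1_on01_with (L i) (L' i) /\
      (forall r, I01 r -> L' i r = - (sumR d (fun k => L k r)) * L i r - lam) /\
      is_RInt (L i) 0 1 (Dc i).

From Stdlib Require Import Reals Lra Lia Psatz.
From Coquelicot Require Import Coquelicot.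
Open Scope R_scope.

(* Summing the equations, S = sum_k L_k solves the Riccati equation S' = - S^2 - d lam.
   If d lam = w^2 > 0, then atan (S / w) + w r is constant on [0,1], and since atan takes
   values in (-pi/2, pi/2) this forces w < pi.  Conversely, if d lam < pi^2, the equation
   u'' = - d lam u has a solution s vanishing at 0 and positive on (0,1]; then
   u r = s (1 - r) + e^D s r is positive with ln u(1) - ln u(0) = D, and S = u'/u.
   Uniqueness: the difference of two solutions of the Riccati equation, and then of two
   components L_i, solves a linear equation V' = - P V with zero mean; such a V is V(0)
   times a positive function, hence vanishes. *)

Definition continuous01_at (g : R -> R) (x : R) : Prop :=
  filterlim g (within I01 (locally x)) (locally (g x)).

Lemma continuous01_at_of_continuous (g : R -> R) (x : R) :
  continuous g x -> continuous01_at g x.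
Proof. apply filterlim_filter_le_1, filter_le_within; apply locally_filter. Qed.

Lemma continuous01_at_comp (f h : R -> R) (x : R) :
  continuous01_at f x -> continuous h (f x) -> continuous01_at (fun y => h (f y)) x.
Proof. intros Hf Hh. eapply filterlim_comp; [exact Hf | exact Hh]. Qed.

Lemma continuous01_at_plus (f g : R -> R) (x : R) :
  continuous01_at f x -> continuous01_at g x -> continuous01_at (fun y => f y + g y) x.
Proof.
  intros Hf Hg. eapply filterlim_comp_2; [exact Hf | exact Hg |].
  apply (filterlim_plus (V := R_NormedModule)).
Qed.

Lemma continuous01_at_mult (f g : R -> R) (x : R) :
  continuous01_at f x -> continuous01_at g x -> continuous01_at (fun y => f y * g y) x.
Proof.
  intros Hf Hg. eapply filterlim_comp_2; [exact Hf | exact Hg |].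
  apply (filterlim_mult (K := R_AbsRing)).
Qed.

Lemma continuous01_at_opp (f : R -> R) (x : R) :
  continuous01_at f x -> continuous01_at (fun y => - f y) x.
Proof.
  intros Hf. eapply filterlim_comp; [exact Hf |].
  apply (filterlim_opp (V := R_NormedModule)).
Qed.

Lemma continuous01_at_minus (f g : R -> R) (x : R) :
  continuous01_at f x -> continuous01_at g x -> continuous01_at (fun y => f y - g y) x.
Proof. intros Hf Hg. now apply continuous01_at_plus, continuous01_at_opp. Qed.

Lemma continuous01_at_sumR (n : nat) (L : nat -> R -> R) (x : R) :
  (forall k, (k < n)%nat -> continuous01_at (L k) x) ->
  continuous01_at (fun r => sumR n (fun k => L k r)) x.
Proof.
  induction n as [|n IH]; intros HL; simpl.
  - apply continuous01_at_of_continuous, continuous_const.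
  - apply continuous01_at_plus; [apply IH; intros k Hk|]; apply HL; lia.
Qed.

Lemma cont_on01_of_continuous (g : R -> R) : (forall x, I01 x -> continuous g x) -> cont_on01 g.
Proof. intros Hg x Hx. now apply continuous01_at_of_continuous, Hg. Qed.

Lemma is_derive_of_deriv_on01 (f f' : R -> R) (x : R) :
  deriv_on01 f f' -> 0 < x < 1 -> is_derive f x (f' x).
Proof.
  intros Hf Hx. apply is_derive_Reals. intros eps Heps.
  destruct (Hf x (conj (Rlt_le _ _ (proj1 Hx)) (Rlt_le _ _ (proj2 Hx)))
              (fun y => Rabs (y - f' x) < eps) (locally_ball _ (mkposreal _ Heps)))
    as [del Hdel].
  assert (Hr : 0 < Rmin del (Rmin x (1 - x))).
  { apply Rmin_glb_lt; [apply cond_pos | apply Rmin_glb_lt; lra]. }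
  exists (mkposreal _ Hr). intros h Hh Hlt. simpl in Hlt.
  pose proof (Rmin_l del (Rmin x (1 - x))). pose proof (Rmin_r del (Rmin x (1 - x))).
  pose proof (Rmin_l x (1 - x)). pose proof (Rmin_r x (1 - x)).
  apply Hdel.
  - change (Rabs (h - 0) < del). rewrite Rminus_0_r. lra.
  - split; [exact Hh|]. pose proof (Rabs_def2 _ _ Hlt). unfold I01. lra.
Qed.

Lemma cont_on01_of_deriv_on01 (f f' : R -> R) : deriv_on01 f f' -> cont_on01 f.
Proof.
  intros Hf x Hx.
  set (F := within (fun h => h <> 0 /\ I01 (x + h)) (locally 0)).
  assert (Hinc : filterlim (fun h => f x + (f (x + h) - f x) / h * h) F
                   (locally (f x + f' x * 0))).
  { eapply filterlim_comp_2;
      [apply filterlim_const | | apply (filterlim_plus (V := R_NormedModule))].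
    eapply filterlim_comp_2; [exact (Hf x Hx) | | apply (filterlim_mult (K := R_AbsRing))].
    eapply filterlim_filter_le_1; [|apply filterlim_id].
    apply filter_le_within; apply locally_filter. }
  rewrite Rmult_0_r, Rplus_0_r in Hinc.
  intros P HP. destruct (Hinc P HP) as [del Hdel].
  exists del. intros y Hy HIy; change R in y.
  destruct (Req_dec y x) as [->|Hne]; [exact (locally_singleton _ _ HP)|].
  replace y with (x + (y - x)) by ring.
  replace (f (x + (y - x))) with (f x + (f (x + (y - x)) - f x) / (y - x) * (y - x))
    by (field; lra).
  apply Hdel.
  - change (Rabs (y - x - 0) < del). rewrite Rminus_0_r. exact Hy.
  - split; [lra|]. now replace (x + (y - x)) with y by ring.
Qed.

Lemma deriv_on01_of_is_derive (f f' : R -> R) :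
  (forall x, I01 x -> is_derive f x (f' x)) -> deriv_on01 f f'.
Proof.
  intros Hf x Hx. apply filterlim_locally. intros eps.
  destruct (proj1 (is_derive_Reals f x (f' x)) (Hf x Hx) eps (cond_pos eps)) as [del Hdel].
  exists del. intros h Hh [Hh0 _]. apply Hdel; [exact Hh0|].
  change (Rabs (h - 0) < del) in Hh. now rewrite Rminus_0_r in Hh.
Qed.

Definition clamp01 (x : R) : R := Rmax 0 (Rmin 1 x).

Lemma clamp01_I01 (x : R) : I01 (clamp01 x).
Proof. unfold clamp01, I01, Rmax, Rmin. repeat destruct Rle_dec; lra. Qed.

Lemma clamp01_id (x : R) : I01 x -> clamp01 x = x.
Proof. unfold clamp01, I01, Rmax, Rmin. repeat destruct Rle_dec; lra. Qed.

Lemma clamp01_lipschitz (x y : R) : Rabs (clamp01 y - clamp01 x) <= Rabs (y - x).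
Proof.
  unfold clamp01, Rmax, Rmin, Rabs.
  repeat destruct Rle_dec; repeat destruct Rcase_abs; lra.
Qed.

(* Composing with [clamp01] turns functions continuous on [0,1] into functions continuous on
   all of R, to which the mean value theorem and the integration lemmas apply. *)
Lemma continuous_clamp01 (P : R -> R) :
  cont_on01 P -> forall x, continuous (fun y => P (clamp01 y)) x.
Proof.
  intros HP x. eapply filterlim_comp; [|exact (HP _ (clamp01_I01 x))].
  intros Q [del Hdel]. exists del. intros y Hy. apply Hdel; [|apply clamp01_I01].
  change (Rabs (clamp01 y - clamp01 x) < del).
  change (Rabs (y - x) < del) in Hy. pose proof (clamp01_lipschitz x y). lra.
Qed.

Lemma const_on01 (Q : R -> R) :
  (forall x, 0 < x < 1 -> is_derive Q x 0) -> cont_on01 Q -> forall x, I01 x -> Q x = Q 0.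
Proof.
  intros HQ HQc x Hx.
  rewrite <- (clamp01_id x Hx), <- (clamp01_id 0) by (unfold I01; lra).
  destruct (MVT_gen (fun y => Q (clamp01 y)) 0 x (fun _ => 0)) as [c [_ Hc]].
  - intros y Hy. rewrite Rmin_left, Rmax_right in Hy by apply Hx.
    destruct Hx as [_ Hx1].
    apply (is_derive_ext_loc Q); [|apply HQ; lra].
    apply (locally_interval _ y 0 1); [simpl; lra .. |].
    intros z Hz0 Hz1. rewrite clamp01_id; [reflexivity|]. simpl in *. unfold I01. lra.
  - intros y _. apply continuity_pt_filterlim, continuous_clamp01, HQc.
  - cbv beta in Hc. lra.
Qed.

Lemma is_RInt01_gt0 (g : R -> R) (v : R) :
  (forall x, I01 x -> continuous g x) -> (forall x, I01 x -> 0 < g x) ->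
  is_RInt g 0 1 v -> 0 < v.
Proof.
  intros Hc Hpos Hv.
  destruct (continuity_ab_min g 0 1 ltac:(lra)) as [m [Hm Hm01]].
  { intros c Hc01. now apply continuity_pt_filterlim, Hc. }
  assert (Hle : (1 - 0) * g m <= v).
  { apply (is_RInt_le (fun _ => g m) g 0 1); [lra | exact (is_RInt_const 0 1 (g m)) | exact Hv |].
    intros x Hx. apply Hm. lra. }
  specialize (Hpos m Hm01). lra.
Qed.

Lemma linear_ode01_positive_multiple (V P : R -> R) :
  (forall x, 0 < x < 1 -> is_derive V x (- P x * V x)) -> cont_on01 V -> cont_on01 P ->
  exists w, (forall x, continuous w x) /\ (forall x, 0 < w x) /\
    (forall r, I01 r -> V r = V 0 * w r).
Proof.
  intros HV HVc HPc.
  set (Pt := fun y => P (clamp01 y)).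
  assert (HPt : forall x, continuous Pt x) by exact (continuous_clamp01 P HPc).
  set (F := fun x => RInt Pt 0 x).
  assert (HF : forall x, is_derive F x (Pt x)).
  { intros x. apply (is_derive_RInt Pt F 0); [|apply HPt].
    apply filter_forall. intros b. apply (RInt_correct (V := R_CompleteNormedModule)).
    apply ex_RInt_continuous. intros; apply HPt. }
  assert (HexpF : forall x, continuous (fun y => exp (F y)) x).
  { intros x. apply (ex_derive_continuous (fun y => exp (F y))). auto_derive. now exists (Pt x). }
  assert (HQ : forall r, I01 r -> V r * exp (F r) = V 0 * exp (F 0)).
  { apply (const_on01 (fun r => V r * exp (F r))).
    - intros x Hx. replace 0 with (- P x * V x * exp (F x) + V x * (Pt x * exp (F x))).
      + apply (is_derive_mult V (fun r => exp (F r))); [now apply HV| |apply Rmult_comm].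
        apply (is_derive_comp exp F); [apply is_derive_exp | apply HF].
      + unfold Pt. rewrite clamp01_id by (unfold I01; lra). ring.
    - intros x Hx. apply (continuous01_at_mult V (fun y => exp (F y))); [now apply HVc|].
      now apply continuous01_at_of_continuous. }
  exists (fun x => exp (- F x)). split; [|split; [intros; apply exp_pos|]].
  - intros x. apply (ex_derive_continuous (fun y => exp (- F y))). auto_derive. now exists (Pt x).
  - intros r Hr. specialize (HQ r Hr).
    assert (HF0 : F 0 = 0) by exact (RInt_point (V := R_CompleteNormedModule) 0 Pt).
    rewrite HF0, exp_0, Rmult_1_r in HQ. rewrite <- HQ, Rmult_assoc, <- exp_plus.
    replace (F r + - F r) with 0 by ring. rewrite exp_0. ring.
Qed.

Lemma linear_ode01_zero_mean (V P : R -> R) :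
  (forall x, 0 < x < 1 -> is_derive V x (- P x * V x)) -> cont_on01 V -> cont_on01 P ->
  is_RInt V 0 1 0 -> forall r, I01 r -> V r = 0.
Proof.
  intros HV HVc HPc HI.
  destruct (linear_ode01_positive_multiple V P HV HVc HPc) as [w [Hwc [Hwpos HVw]]].
  assert (Hw : is_RInt w 0 1 (RInt w 0 1)).
  { apply (RInt_correct (V := R_CompleteNormedModule)), ex_RInt_continuous.
    intros; apply Hwc. }
  assert (HJ : 0 < RInt w 0 1) by (apply (is_RInt01_gt0 w); auto).
  assert (HVJ : is_RInt V 0 1 (V 0 * RInt w 0 1)).
  { apply (is_RInt_ext (fun x => scal (V 0) (w x))).
    - intros x Hx. rewrite Rmin_left, Rmax_right in Hx by lra.
      symmetry. apply HVw. unfold I01. lra.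
    - exact (is_RInt_scal (V := R_NormedModule) w 0 1 (V 0) _ Hw). }
  assert (HV0 : V 0 * RInt w 0 1 = 0).
  { now rewrite <- (is_RInt_unique _ _ _ _ HVJ), (is_RInt_unique _ _ _ _ HI). }
  intros r Hr. rewrite HVw by exact Hr.
  assert (V 0 = 0) as -> by nra. ring.
Qed.

Lemma is_RInt_minus_same (f g : R -> R) (a b c : R) :
  is_RInt f a b c -> is_RInt g a b c -> is_RInt (fun r => f r - g r) a b 0.
Proof.
  intros Hf Hg. rewrite <- (Rminus_eq_0 c).
  exact (is_RInt_minus (V := R_NormedModule) f g a b c c Hf Hg).
Qed.

Lemma riccati01_lt_PI2 (S : R -> R) (mu : R) :
  (forall x, 0 < x < 1 -> is_derive S x (- S x ^ 2 - mu)) -> cont_on01 S -> mu < PI ^ 2.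
Proof.
  intros HS HSc.
  pose proof PI_RGT_0 as HPI.
  destruct (Rle_or_lt mu 0) as [Hmu|Hmu]; [nra|].
  set (w := sqrt mu).
  assert (Hw : 0 < w) by (apply sqrt_lt_R0; exact Hmu).
  assert (Hw2 : w * w = mu) by (apply sqrt_sqrt; lra).
  assert (Hpsi : forall x, I01 x -> atan (S x / w) + w * x = atan (S 0 / w) + w * 0).
  { apply (const_on01 (fun x => atan (S x / w) + w * x)).
    - intros x Hx.
      assert (DS : Derive (fun y => S y) x = - S x ^ 2 - mu) by (apply is_derive_unique, HS, Hx).
      auto_derive.
      + exists (- S x ^ 2 - mu). now apply HS.
      + rewrite DS, <- Hw2. field. split; [lra|nra].
    - intros x Hx. apply (continuous01_at_plus (fun y => atan (S y / w)) (fun y => w * y)).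
      + apply (continuous01_at_comp S (fun z => atan (z / w))); [now apply HSc|].
        apply (ex_derive_continuous (fun z => atan (z / w))). auto_derive. lra.
      + apply continuous01_at_of_continuous.
        apply (ex_derive_continuous (fun y => w * y)). auto_derive. easy. }
  assert (H1 := Hpsi 1 (conj Rle_0_1 (Rle_refl 1))).
  pose proof (atan_bound (S 1 / w)). pose proof (atan_bound (S 0 / w)).
  assert (w < PI) by lra.
  rewrite <- Hw2. nra.
Qed.

Lemma riccati01_unique (S1 S2 : R -> R) (mu c : R) :
  (forall x, 0 < x < 1 -> is_derive S1 x (- S1 x ^ 2 - mu)) ->
  (forall x, 0 < x < 1 -> is_derive S2 x (- S2 x ^ 2 - mu)) ->
  cont_on01 S1 -> cont_on01 S2 -> is_RInt S1 0 1 c -> is_RInt S2 0 1 c ->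
  forall r, I01 r -> S1 r = S2 r.
Proof.
  intros HS1 HS2 HS1c HS2c HI1 HI2 r Hr.
  apply Rminus_diag_uniq. revert r Hr.
  apply (linear_ode01_zero_mean (fun r => S1 r - S2 r) (fun r => S1 r + S2 r)).
  - intros x Hx.
    replace (- (S1 x + S2 x) * (S1 x - S2 x))
      with ((- S1 x ^ 2 - mu) - (- S2 x ^ 2 - mu)) by ring.
    exact (is_derive_minus S1 S2 x _ _ (HS1 x Hx) (HS2 x Hx)).
  - intros x Hx. apply continuous01_at_minus; [apply HS1c | apply HS2c]; exact Hx.
  - intros x Hx. apply continuous01_at_plus; [apply HS1c | apply HS2c]; exact Hx.
  - exact (is_RInt_minus_same S1 S2 0 1 c HI1 HI2).
Qed.

Definition sumL (d : nat) (L : nat -> R -> R) (r : R) : R := sumR d (fun k => L k r).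

Lemma sumR_ext (n : nat) (f g : nat -> R) :
  (forall k, (k < n)%nat -> f k = g k) -> sumR n f = sumR n g.
Proof.
  induction n as [|n IH]; intros Hfg; simpl; [reflexivity|].
  rewrite Hfg by lia. f_equal. apply IH. intros k Hk. apply Hfg. lia.
Qed.

Lemma sumR_affine (n : nat) (A B : R) (f : nat -> R) :
  sumR n (fun k => A * f k + B) = A * sumR n f + INR n * B.
Proof. induction n as [|n IH]; cbn [sumR]; [simpl; ring|]. rewrite IH, S_INR. ring. Qed.

Lemma is_derive_sumL (n : nat) (L L' : nat -> R -> R) (x : R) :
  (forall k, (k < n)%nat -> is_derive (L k) x (L' k x)) ->
  is_derive (sumL n L) x (sumL n L' x).
Proof.
  unfold sumL. induction n as [|n IH]; intros HL; simpl.
  - apply (is_derive_const (K := R_AbsRing) 0 x).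
  - apply (is_derive_plus (fun r => sumR n (fun k => L k r)) (L n));
      [apply IH; intros k Hk|]; apply HL; lia.
Qed.

Lemma is_RInt_sumL (n : nat) (L : nat -> R -> R) (c : nat -> R) (a b : R) :
  (forall k, (k < n)%nat -> is_RInt (L k) a b (c k)) -> is_RInt (sumL n L) a b (sumR n c).
Proof.
  unfold sumL. induction n as [|n IH]; intros HL; simpl.
  - pose proof (is_RInt_const (V := R_NormedModule) a b 0) as H0.
    change (scal (b - a) 0) with ((b - a) * 0) in H0. now rewrite Rmult_0_r in H0.
  - apply (is_RInt_plus (V := R_NormedModule) (fun r => sumR n (fun k => L k r)) (L n));
      [apply IH; intros k Hk|]; apply HL; lia.
Qed.

Lemma IsSol_sumL_riccati (d : nat) (lam : R) (Dc : nat -> R) (L : nat -> R -> R) :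
  IsSol d lam Dc L ->
  (forall x, 0 < x < 1 -> is_derive (sumL d L) x (- sumL d L x ^ 2 - INR d * lam)) /\
  cont_on01 (sumL d L) /\ is_RInt (sumL d L) 0 1 (sumR d Dc).
Proof.
  intros [L' HL]. split; [|split].
  - intros x Hx.
    replace (- sumL d L x ^ 2 - INR d * lam) with (sumL d L' x).
    { apply is_derive_sumL. intros k Hk.
      apply is_derive_of_deriv_on01; [apply HL|]; assumption. }
    unfold sumL at 1. rewrite (sumR_ext d _ (fun k => - sumL d L x * L k x + - lam)).
    + rewrite sumR_affine. fold (sumL d L x). ring.
    + intros k Hk. apply HL; [exact Hk | unfold I01; lra].
  - intros x Hx. apply continuous01_at_sumR. intros k Hk.
    apply (cont_on01_of_deriv_on01 _ (L' k)); [apply HL|]; assumption.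
  - apply is_RInt_sumL. intros k Hk. apply HL, Hk.
Qed.

Lemma IsSol_lam_lt (d : nat) (lam : R) (Dc : nat -> R) (L : nat -> R -> R) :
  (0 < d)%nat -> IsSol d lam Dc L -> lam < PI ^ 2 / INR d.
Proof.
  intros Hd Hsol.
  destruct (IsSol_sumL_riccati d lam Dc L Hsol) as [HS [HSc _]].
  assert (Hmu := riccati01_lt_PI2 (sumL d L) (INR d * lam) HS HSc).
  assert (0 < INR d) by (apply lt_0_INR; exact Hd).
  apply Rmult_lt_reg_l with (INR d); [assumption|].
  replace (INR d * (PI ^ 2 / INR d)) with (PI ^ 2) by (field; lra). exact Hmu.
Qed.

Lemma IsSol_unique (d : nat) (lam : R) (Dc : nat -> R) (L1 L2 : nat -> R -> R) :
  IsSol d lam Dc L1 -> IsSol d lam Dc L2 ->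
  forall i, (i < d)%nat -> forall r, I01 r -> L1 i r = L2 i r.
Proof.
  intros H1 H2.
  destruct (IsSol_sumL_riccati d lam Dc L1 H1) as [HS1 [HS1c HI1]].
  destruct (IsSol_sumL_riccati d lam Dc L2 H2) as [HS2 [HS2c HI2]].
  assert (ES := riccati01_unique _ _ _ _ HS1 HS2 HS1c HS2c HI1 HI2).
  destruct H1 as [L1' HL1], H2 as [L2' HL2]. intros i Hi r Hr.
  destruct (HL1 i Hi) as [[Hd1 _] [HE1 HR1]], (HL2 i Hi) as [[Hd2 _] [HE2 HR2]].
  apply Rminus_diag_uniq. revert r Hr.
  apply (linear_ode01_zero_mean (fun r => L1 i r - L2 i r) (sumL d L1)).
  - intros x Hx. assert (Hx' : I01 x) by (unfold I01; lra).
    replace (- sumL d L1 x * (L1 i x - L2 i x)) with (L1' i x - L2' i x).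
    + exact (is_derive_minus _ _ x _ _
               (is_derive_of_deriv_on01 _ _ x Hd1 Hx) (is_derive_of_deriv_on01 _ _ x Hd2 Hx)).
    + rewrite HE1, HE2 by exact Hx'. fold (sumL d L1 x) (sumL d L2 x).
      rewrite <- (ES x Hx'). ring.
  - intros x Hx.
    apply continuous01_at_minus; [exact (cont_on01_of_deriv_on01 _ _ Hd1 x Hx)
                                 |exact (cont_on01_of_deriv_on01 _ _ Hd2 x Hx)].
  - exact HS1c.
  - exact (is_RInt_minus_same _ _ 0 1 _ HR1 HR2).
Qed.

Lemma is_RInt_log_derive (u u' : R -> R) :
  (forall r, I01 r -> is_derive u r (u' r)) -> (forall r, I01 r -> continuous u' r) ->
  (forall r, I01 r -> 0 < u r) -> is_RInt (fun r => u' r / u r) 0 1 (ln (u 1) - ln (u 0)).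
Proof.
  intros Hu Hu'c Hpos.
  apply (is_RInt_derive (V := R_CompleteNormedModule) (fun r => ln (u r)));
    intros x Hx; rewrite Rmin_left, Rmax_right in Hx by lra.
  - apply (is_derive_comp ln u); [apply is_derive_ln, Hpos | apply Hu]; exact Hx.
  - apply (continuous_mult (K := R_AbsRing) u' (fun r => / u r)); [now apply Hu'c|].
    apply continuous_Rinv_comp.
    + apply (ex_derive_continuous u). exists (u' x). now apply Hu.
    + specialize (Hpos x Hx). lra.
Qed.

Definition oscillator (mu : R) (u u' : R -> R) : Prop :=
  forall r, is_derive u r (u' r) /\ is_derive u' r (- mu * u r).

Section SolutionFromOscillator.

Variables (d : nat) (lam : R) (u u' : R -> R).
Hypothesis Hd : (0 < d)%nat.
Hypothesis Hu : oscillator (INR d * lam) u u'.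
Hypothesis Hpos : forall r, I01 r -> 0 < u r.

(* [u'/u] solves the summed Riccati equation; each component is its share [u'/(d u)]
   plus a multiple of [1/u], which solves the linear equation [V' = - (u'/u) V]. *)
Definition component (a r : R) : R := a / u r + u' r / (INR d * u r).

Let Hd_pos : 0 < INR d.
Proof. apply lt_0_INR, Hd. Qed.

Let Du (x : R) : Derive (fun y => u y) x = u' x.
Proof. apply is_derive_unique, Hu. Qed.

Let Du' (x : R) : Derive (fun y => u' y) x = - (INR d * lam) * u x.
Proof. apply is_derive_unique, Hu. Qed.

Let ex_derive_u (x : R) : ex_derive u x.
Proof. exists (u' x). apply Hu. Qed.

Let ex_derive_u' (x : R) : ex_derive u' x.
Proof. exists (- (INR d * lam) * u x). apply Hu. Qed.

Lemma is_derive_component (a x : R) :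
  I01 x -> is_derive (component a) x (- (u' x / u x) * component a x - lam).
Proof.
  intros Hx. pose proof (Hpos x Hx) as Hux. unfold component.
  auto_derive.
  - repeat split; auto; nra.
  - rewrite Du, Du'. field. lra.
Qed.

Lemma continuous_component_deriv (a x : R) :
  I01 x -> continuous (fun r => - (u' r / u r) * component a r - lam) x.
Proof.
  intros Hx. pose proof (Hpos x Hx) as Hux. unfold component.
  apply (ex_derive_continuous (fun r => - (u' r / u r) * (a / u r + u' r / (INR d * u r)) - lam)).
  auto_derive. repeat split; auto; nra.
Qed.

Lemma sumL_component (a : nat -> R) (r : R) :
  I01 r -> sumR d a = 0 -> sumL d (fun k => component (a k)) r = u' r / u r.
Proof.
  intros Hr Ha. pose proof (Hpos r Hr) as Hur. unfold sumL, component.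
  rewrite (sumR_ext d _ (fun k => / u r * a k + u' r / (INR d * u r)))
    by (intros; field; lra).
  rewrite sumR_affine, Ha. field. lra.
Qed.

Let continuous_inv_u (x : R) : I01 x -> continuous (fun r => / u r) x.
Proof.
  intros Hx. apply continuous_Rinv_comp; [apply (ex_derive_continuous u), ex_derive_u|].
  pose proof (Hpos x Hx). lra.
Qed.

Let is_RInt_inv_u : is_RInt (fun r => / u r) 0 1 (RInt (fun r => / u r) 0 1).
Proof.
  apply (RInt_correct (V := R_CompleteNormedModule)), ex_RInt_continuous.
  intros x Hx. rewrite Rmin_left, Rmax_right in Hx by lra. now apply continuous_inv_u.
Qed.

Lemma is_RInt_component (a : R) :
  is_RInt (component a) 0 1
    (a * RInt (fun r => / u r) 0 1 + / INR d * (ln (u 1) - ln (u 0))).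
Proof.
  apply (is_RInt_plus (V := R_NormedModule) (fun r => a / u r) (fun r => u' r / (INR d * u r))).
  - exact (is_RInt_scal (V := R_NormedModule) _ 0 1 a _ is_RInt_inv_u).
  - apply (is_RInt_ext (fun r => / INR d * (u' r / u r))).
    + intros x Hx. rewrite Rmin_left, Rmax_right in Hx by lra.
      assert (Hx' : I01 x) by (unfold I01; lra). pose proof (Hpos x Hx').
      change (/ INR d * (u' x / u x) = u' x / (INR d * u x)). field. lra.
    + apply (is_RInt_scal (V := R_NormedModule) (fun r => u' r / u r)), is_RInt_log_derive.
      * intros r _. apply Hu.
      * intros r _. apply (ex_derive_continuous u'), ex_derive_u'.
      * exact Hpos.
Qed.

Lemma IsSol_of_oscillator (Dc : nat -> R) :
  ln (u 1) - ln (u 0) = sumR d Dc -> exists L, IsSol d lam Dc L.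
Proof.
  intros Hlog.
  set (J := RInt (fun r => / u r) 0 1).
  assert (HJ : 0 < J).
  { apply (is_RInt01_gt0 (fun r => / u r)); [exact continuous_inv_u | | exact is_RInt_inv_u].
    intros x Hx. apply Rinv_0_lt_compat, Hpos, Hx. }
  set (a i := (Dc i - sumR d Dc / INR d) / J).
  assert (Ha : sumR d a = 0).
  { unfold a. rewrite (sumR_ext d _ (fun k => / J * Dc k + - (sumR d Dc / INR d) / J))
      by (intros; field; lra).
    rewrite sumR_affine. field. lra. }
  exists (fun i => component (a i)), (fun i r => - (u' r / u r) * component (a i) r - lam).
  intros i _. split; [split|split].
  - apply deriv_on01_of_is_derive. intros x Hx. now apply is_derive_component.
  - apply cont_on01_of_continuous. intros x Hx. now apply continuous_component_deriv.
  - intros r Hr. fold (sumL d (fun k => component (a k)) r). now rewrite sumL_component.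
  - replace (Dc i) with (a i * J + / INR d * (ln (u 1) - ln (u 0))); [apply is_RInt_component|].
    rewrite Hlog. unfold a. field. lra.
Qed.

End SolutionFromOscillator.

Lemma oscillator_log_ratio (mu : R) (s s' : R -> R) (D : R) :
  oscillator mu s s' -> s 0 = 0 -> (forall t, 0 < t <= 1 -> 0 < s t) ->
  exists u u', oscillator mu u u' /\ (forall r, I01 r -> 0 < u r) /\
    ln (u 1) - ln (u 0) = D.
Proof.
  intros Hs Hs0 Hspos.
  assert (Hsnn : forall t, 0 <= t <= 1 -> 0 <= s t).
  { intros t Ht. destruct (Req_dec t 0) as [->|Ht0]; [lra|]. apply Rlt_le, Hspos. lra. }
  assert (Ds : forall t, Derive (fun y => s y) t = s' t) by (intros; apply is_derive_unique, Hs).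
  assert (Ds' : forall t, Derive (fun y => s' y) t = - mu * s t)
    by (intros; apply is_derive_unique, Hs).
  assert (Es : forall t, ex_derive s t) by (intros t; exists (s' t); apply Hs).
  assert (Es' : forall t, ex_derive s' t) by (intros t; exists (- mu * s t); apply Hs).
  pose proof (exp_pos D) as HE.
  exists (fun r => s (1 - r) + exp D * s r), (fun r => - s' (1 - r) + exp D * s' r).
  split; [|split].
  - intros r. unfold Rminus. split; auto_derive; auto; rewrite ?Ds, ?Ds'; ring.
  - intros r [H0 H1]. destruct (Rlt_or_le r 1) as [Hr|Hr].
    + assert (0 < s (1 - r)) by (apply Hspos; lra).
      assert (0 <= s r) by (apply Hsnn; lra). nra.
    + assert (0 <= s (1 - r)) by (apply Hsnn; lra).
      assert (0 < s r) by (apply Hspos; lra). nra.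
  - rewrite Rminus_eq_0, Rminus_0_r, Hs0, Rplus_0_l, Rmult_0_r, Rplus_0_r.
    assert (0 < s 1) by (apply Hspos; lra).
    rewrite ln_mult, ln_exp by assumption. ring.
Qed.

Lemma oscillator_positive_on01 (mu : R) : mu < PI ^ 2 ->
  exists s s', oscillator mu s s' /\ s 0 = 0 /\ (forall t, 0 < t <= 1 -> 0 < s t).
Proof.
  intros HmuPI. destruct (Rtotal_order mu 0) as [Hmu|[Hmu|Hmu]].
  - set (v := sqrt (- mu)).
    assert (Hv : 0 < v) by (apply sqrt_lt_R0; lra).
    assert (Hv2 : v * v = - mu) by (apply sqrt_sqrt; lra).
    exists (fun t => exp (v * t) - exp (- (v * t))),
           (fun t => v * (exp (v * t) + exp (- (v * t)))).
    split; [|split].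
    + intros t. split; auto_derive; auto; [ring|]. rewrite <- (Ropp_involutive mu), <- Hv2. ring.
    + rewrite Rmult_0_r, Ropp_0. ring.
    + intros t Ht. assert (exp (- (v * t)) < exp (v * t)) by (apply exp_increasing; nra). lra.
  - exists (fun t => t), (fun _ => 1). split; [|split].
    + intros t. subst mu. split; auto_derive; auto; ring.
    + reflexivity.
    + intros t Ht. lra.
  - set (w := sqrt mu).
    assert (Hw : 0 < w) by (apply sqrt_lt_R0; lra).
    assert (Hw2 : w * w = mu) by (apply sqrt_sqrt; lra).
    assert (HwPI : w < PI) by (pose proof PI_RGT_0; nra).
    exists (fun t => sin (w * t)), (fun t => w * cos (w * t)). split; [|split].
    + intros t. split; auto_derive; auto; [ring|]. rewrite <- Hw2. ring.
    + rewrite Rmult_0_r. apply sin_0.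
    + intros t Ht. apply sin_gt_0; nra.
Qed.

Lemma IsSol_exists (d : nat) (lam : R) (Dc : nat -> R) :
  (0 < d)%nat -> lam < PI ^ 2 / INR d -> exists L, IsSol d lam Dc L.
Proof.
  intros Hd Hlam.
  assert (Hmu : INR d * lam < PI ^ 2).
  { assert (0 < INR d) by (apply lt_0_INR, Hd).
    apply Rmult_lt_compat_l with (r := INR d) in Hlam; [|assumption].
    replace (INR d * (PI ^ 2 / INR d)) with (PI ^ 2) in Hlam by (field; lra). exact Hlam. }
  destruct (oscillator_positive_on01 _ Hmu) as [s [s' [Hs [Hs0 Hspos]]]].
  destruct (oscillator_log_ratio _ _ _ (sumR d Dc) Hs Hs0 Hspos) as [u [u' [Hu [Hupos Hlog]]]].
  exact (IsSol_of_oscillator d lam u u' Hd Hu Hupos Dc Hlog).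
Qed.

Theorem lemma3p2 (d : nat) (Hd : (2 <= d)%nat) (lam : R) (Dc : nat -> R) :
  ((exists L : nat -> R -> R, IsSol d lam Dc L) <-> lam < PI ^ 2 / INR d) /\
  (forall L1 L2 : nat -> R -> R, IsSol d lam Dc L1 -> IsSol d lam Dc L2 ->
     forall i, (i < d)%nat -> forall r, I01 r -> L1 i r = L2 i r).
Proof.
  assert (Hd0 : (0 < d)%nat) by lia.
  split; [split|].
  - intros [L HL]. exact (IsSol_lam_lt d lam Dc L Hd0 HL).
  - exact (IsSol_exists d lam Dc Hd0).
  - exact (IsSol_unique d lam Dc).
Qed.
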